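(* For each integer $N>6$ there exists $r>0$ such that for every regular hyperbolic $N$-gon $P$ (in the hyperbolic plane $\mathbb{H}^2$ of curvature $-1$) of radius $<r$, any two intersecting diagonals of $P$, each of length at most $\lfloor (N-1)/6\rfloor$, have internal angle $>2\pi/3$.
   Context: The \emph{radius} of a regular polygon is the distance from its centre to any vertex. For a regular polygon $P$, a \emph{diagonal} is a geodesic segment connecting two (possibly consecutive) vertices of $P$. A \emph{segment} of $P$ is the smaller of the two pieces obtained by cutting $P$ along a diagonal (if the diagonal is an edge, the segment is that edge); the \emph{length} of a segment is the number of edges of $P$ it contains, and the \emph{length} of a diagonal is the length of the segment it subtends. If $P$ is an $N$-gon and $d_1,d_2$ are diagonals of length less than $N/2$ intersecting at a point $p$ (possibly a common endpoint), exactly one connected component of $P\setminus(d_1\cup d_2)$ contains the centre of $P$; the angle at $p$ between $d_1$ and $d_2$ lying in this component is the \emph{internal angle} between $d_1$ and $d_2$. *)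

(* hyperboloid model of the hyperbolic plane H^2 (curvature -1). *)
From Stdlib Require Import Reals Lra Lia List.
Open Scope R_scope.

Record pt := Pt { x0 : R; x1 : R; x2 : R }.

Definition lor (x y : pt) : R := - x0 x * x0 y + x1 x * x1 y + x2 x * x2 y.

Definition padd (x y : pt) : pt := Pt (x0 x + x0 y) (x1 x + x1 y) (x2 x + x2 y).
Definition pscal (a : R) (x : pt) : pt := Pt (a * x0 x) (a * x1 x) (a * x2 x).

Definition inH2 (x : pt) : Prop := lor x x = -1 /\ 0 < x0 x.

(** Geodesic segment [u,v] in the hyperboloid model:
    points of H^2 in the positive cone spanned by u and v. *)
Definition geodesic_segment (u v : pt) (x : pt) : Prop :=
  inH2 x /\ exists a b : R, 0 <= a /\ 0 <= b /\ x = padd (pscal a u) (pscal b v).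

Definition frame (c e1 e2 : pt) : Prop :=
  inH2 c /\ lor c e1 = 0 /\ lor c e2 = 0 /\
  lor e1 e1 = 1 /\ lor e2 e2 = 1 /\ lor e1 e2 = 0.

(** The k-th vertex of the regular N-gon with centre c, radius rho, in the frame
    (c;e1,e2): the point at distance rho from c in direction
    cos(2 pi k/N) e1 + sin(2 pi k/N) e2  (exponential map at c).
    Every regular hyperbolic N-gon arises this way for some frame and rho > 0. *)
Definition reg_vertex (N : nat) (c e1 e2 : pt) (rho : R) (k : nat) : pt :=
  padd (pscal (cosh rho) c)
       (pscal (sinh rho)
          (padd (pscal (cos (2 * PI * INR k / INR N)) e1)
                (pscal (sin (2 * PI * INR k / INR N)) e2))).

(** Length of the diagonal joining vertices i and j (i <> j, i,j < N): number of
    edges of the smaller of the two pieces cut off. *)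
Definition diag_length (N i j : nat) : nat :=
  let d := if (i <=? j)%nat then (j - i)%nat else (i - j)%nat in
  Nat.min d (N - d).

(** Unit tangent direction (unnormalised) at p of the geodesic from p to q. *)
Definition tang (p q : pt) : pt := padd q (pscal (lor p q) p).

Definition det3 (a b c : pt) : R :=
  x0 a * (x1 b * x2 c - x2 b * x1 c)
  - x1 a * (x0 b * x2 c - x2 b * x0 c)
  + x2 a * (x0 b * x1 c - x1 b * x0 c).

Definition tangle (u w : pt) : R := acos (lor u w / sqrt (lor u u * lor w w)).

(** Oriented angle in [0, 2 pi) from u to w in the tangent plane at p, the
    orientation of T_p H^2 being given by the area form det(p, . , .). *)
Definition oangle (p u w : pt) : R :=
  if Rle_dec 0 (det3 p u w) then tangle u w
  else if Req_EM_T (tangle u w) 0 then 0 else 2 * PI - tangle u w.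

Definition pt_eq_dec (x y : pt) : {x = y} + {x <> y}.
Proof.
  destruct x as [a b c], y as [a' b' c'].
  destruct (Req_EM_T a a'); [|right; congruence].
  destruct (Req_EM_T b b'); [|right; congruence].
  destruct (Req_EM_T c c'); [|right; congruence].
  left; subst; reflexivity.
Defined.

Definition list_min (l : list R) : R :=
  match l with nil => 0 | x :: t => fold_right Rmin x t end.
Definition list_max (l : list R) : R :=
  match l with nil => 0 | x :: t => fold_right Rmax x t end.

(** The rays from p along the diagonals (towards those
    endpoints different from p) cut the tangent plane at p into angular sectors;
    the internal angle is the size of the sector containing the direction of the
    centre c (i.e. the angle at p between d1 and d2 on the side of the
    component of P \ (d1 u d2) containing the centre).  Measuring oriented
    angles alpha from the centre direction, this sector has size
    min alpha + (2 pi - max alpha). *)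
Definition internal_angle (c p a1 b1 a2 b2 : pt) : R :=
  let ends := filter (fun q => if pt_eq_dec q p then false else true)
                     (a1 :: b1 :: a2 :: b2 :: nil) in
  let alphas := map (fun q => oangle p (tang p c) (tang p q)) ends in
  list_min alphas + (2 * PI - list_max alphas).

From Pilot Require Import Defs.
From Stdlib Require Import Reals Lra Lia List Psatz.
Open Scope R_scope.

(* In the hyperboloid model
   <c, v_k> = -cosh rho and <v_i, v_j> = -(1 + sinh^2 rho (1 - cos (theta_i - theta_j))).
   For p = a v_i + b v_j on a diagonal of length at most m, where 6 m < N, an explicit
   computation bounds the cosine of the angle at p between the directions to c and to
   v_i by 1/2, provided (1 + sinh^2 rho) (1 - cos (2 pi m / N)) < 1/2; this holds for
   small rho because cos (2 pi m / N) > 1/2.  Hence, measured from the direction of the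
   centre, every endpoint direction lies strictly between pi/3 and 5 pi/3, and the sector
   containing the centre is larger than 2 pi/3. *)

Lemma lor_sym x y : lor x y = lor y x.
Proof. destruct x, y; unfold lor; simpl; ring. Qed.

Lemma lor_paddl x y z : lor (padd x y) z = lor x z + lor y z.
Proof. destruct x, y, z; unfold lor; simpl; ring. Qed.

Lemma lor_paddr x y z : lor z (padd x y) = lor z x + lor z y.
Proof. destruct x, y, z; unfold lor; simpl; ring. Qed.

Lemma lor_pscall a x z : lor (pscal a x) z = a * lor x z.
Proof. destruct x, z; unfold lor; simpl; ring. Qed.

Lemma lor_pscalr a x z : lor z (pscal a x) = a * lor z x.
Proof. destruct x, z; unfold lor; simpl; ring. Qed.

Ltac lor_expand := repeat rewrite ?lor_paddl, ?lor_paddr, ?lor_pscall, ?lor_pscalr.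

Lemma lor_tang p x y : lor p p = -1 ->
  lor (tang p x) (tang p y) = lor x y + lor p x * lor p y.
Proof.
  intros Hp. unfold tang. lor_expand. rewrite Hp, (lor_sym x p). ring.
Qed.

Lemma geodesic_segment_sym u v x : geodesic_segment u v x -> geodesic_segment v u x.
Proof.
  intros [Hx [a [b [Ha [Hb ->]]]]]. split; [exact Hx|].
  exists b, a. repeat split; auto. destruct (pscal a u), (pscal b v).
  unfold padd; simpl; f_equal; ring.
Qed.

Lemma acos_gt_PI3 x : x < 1/2 -> PI/3 < acos x.
Proof.
  intros Hx. pose proof PI_RGT_0.
  destruct (Rle_dec x (-1)) as [h|h].
  - unfold acos. destruct (Rle_dec x (-1)); [lra | contradiction].
  - pose proof (acos_bound x).
    destruct (Rle_or_lt (acos x) (PI/3)) as [Hle|]; [exfalso | assumption].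
    assert (Hc : cos (PI/3) <= cos (acos x)) by (apply cos_decr_1; lra).
    rewrite cos_acos, cos_PI3 in Hc by lra. lra.
Qed.

Lemma div_sqrt_lt_half x y : (0 < x -> 4 * (x * x) < y) -> x / sqrt y < 1/2.
Proof.
  intros H. pose proof (sqrt_pos y).
  destruct (Rle_or_lt x 0) as [Hx|Hx].
  - destruct (Req_dec (sqrt y) 0) as [E|E].
    + rewrite E. unfold Rdiv. rewrite Rinv_0. lra.
    + assert (0 < / sqrt y) by (apply Rinv_0_lt_compat; lra).
      unfold Rdiv. nra.
  - specialize (H Hx).
    assert (Hs : 2 * x < sqrt y).
    { rewrite <- (sqrt_square (2 * x)) by lra. apply sqrt_lt_1; nra. }
    apply (Rmult_lt_reg_r (sqrt y)); [lra|].
    unfold Rdiv. rewrite Rmult_assoc, Rinv_l by lra. lra.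
Qed.

Lemma chord_poly_ineq a b S K : 0 <= a -> a < b -> 0 <= S -> 0 <= K -> (1 + S) * K < 1/2 ->
  4 * (1 + S) * K * ((b - a) * (b - a)) < ((a + b) * (a + b) - 2 * a * b * K) * (2 + S * K).
Proof.
  intros Ha Hab HS HK HSK.
  assert (0 <= S * K) by nra.
  assert (0 < (b - a) * (b - a)) by nra.
  assert (0 <= (2 + S * K) * (2 * (a * b)) * (2 - K))
    by (apply Rmult_le_pos; [apply Rmult_le_pos|]; nra).
  assert (0 < (b - a) * (b - a) * (2 + S * K - 4 * (1 + S) * K)) by (apply Rmult_lt_0_compat; lra).
  assert (E : ((a + b) * (a + b) - 2 * a * b * K) * (2 + S * K) - 4 * (1 + S) * K * ((b - a) * (b - a))
              = (b - a) * (b - a) * (2 + S * K - 4 * (1 + S) * K) + (2 + S * K) * (2 * (a * b)) * (2 - K))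
    by ring.
  lra.
Qed.

Lemma chord_center_cos_lt_half a b S K ch :
  ch * ch = 1 + S -> 0 < ch -> 0 <= S -> 0 <= K -> (1 + S) * K < 1/2 ->
  0 <= a -> 0 <= b -> a * a + b * b + 2 * a * b * (1 + S * K) = 1 ->
  (-ch + (a + b) * ch * (a + b * (1 + S * K))) /
  sqrt ((-1 + (a + b) * ch * ((a + b) * ch)) *
        (-1 + (a + b * (1 + S * K)) * (a + b * (1 + S * K)))) < 1/2.
Proof.
  intros Hch Hch0 HS HK HSK Ha Hb Hab.
  apply div_sqrt_lt_half. intros Hnum.
  assert (Enum : -ch + (a + b) * ch * (a + b * (1 + S * K)) = ch * (S * K * b * (b - a))) by nra.
  assert (Ew : -1 + (a + b) * ch * ((a + b) * ch) = S * ((a + b) * (a + b) - 2 * a * b * K)) by nra.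
  assert (Eu : -1 + (a + b * (1 + S * K)) * (a + b * (1 + S * K)) = S * K * (b * b) * (2 + S * K))
    by nra.
  rewrite Enum in Hnum |- *. rewrite Ew, Eu.
  assert (Hpos : 0 < S * K * b * (b - a)) by nra.
  assert (0 < S) by (destruct (Req_dec S 0) as [->|]; nra).
  assert (0 < K) by (destruct (Req_dec K 0) as [->|]; nra).
  assert (0 < b) by (destruct (Req_dec b 0) as [->|]; nra).
  assert (0 <= S * K * b) by (apply Rmult_le_pos; [apply Rmult_le_pos|]; lra).
  assert (a < b) by (destruct (Rle_or_lt b a); nra).
  assert (0 < S * S * K * (b * b)) by (repeat apply Rmult_lt_0_compat; lra).
  pose proof (chord_poly_ineq a b S K Ha ltac:(lra) HS HK HSK).
  replace (4 * (ch * (S * K * b * (b - a)) * (ch * (S * K * b * (b - a)))))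
    with (S * S * K * (b * b) * (4 * (ch * ch) * K * ((b - a) * (b - a)))) by ring.
  replace (S * ((a + b) * (a + b) - 2 * a * b * K) * (S * K * (b * b) * (2 + S * K)))
    with (S * S * K * (b * b) * (((a + b) * (a + b) - 2 * a * b * K) * (2 + S * K))) by ring.
  rewrite Hch. apply Rmult_lt_compat_l; lra.
Qed.

Lemma chord_center_angle_gt c A B p S K ch :
  lor c c = -1 -> lor A A = -1 -> lor B B = -1 ->
  lor c A = - ch -> lor c B = - ch -> lor A B = - (1 + S * K) ->
  ch * ch = 1 + S -> 0 < ch -> 0 <= S -> 0 <= K -> (1 + S) * K < 1/2 ->
  geodesic_segment A B p ->
  tangle (tang p c) (tang p A) > PI/3.
Proof.
  intros Hcc HAA HBB HcA HcB HAB Hch Hch0 HS HK HSK [[Hpp _] [a [b [Ha [Hb Ep]]]]].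
  assert (EpA : lor p A = - (a + b * (1 + S * K))).
  { rewrite Ep. lor_expand. rewrite (lor_sym B A), HAA, HAB. ring. }
  assert (Epc : lor p c = - ((a + b) * ch)).
  { rewrite Ep. lor_expand. rewrite (lor_sym A c), (lor_sym B c), HcA, HcB. ring. }
  assert (Hab : a * a + b * b + 2 * a * b * (1 + S * K) = 1).
  { rewrite Ep in Hpp. rewrite !lor_paddl, !lor_paddr, !lor_pscall, !lor_pscalr in Hpp.
    rewrite (lor_sym B A), HAA, HBB, HAB in Hpp. lra. }
  unfold tangle. apply acos_gt_PI3.
  rewrite !lor_tang, EpA, Epc, HcA, Hcc, HAA by exact Hpp.
  replace (- ch + - ((a + b) * ch) * - (a + b * (1 + S * K)))
    with (- ch + (a + b) * ch * (a + b * (1 + S * K))) by ring.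
  replace (-1 + - ((a + b) * ch) * - ((a + b) * ch)) with (-1 + (a + b) * ch * ((a + b) * ch)) by ring.
  replace (-1 + - (a + b * (1 + S * K)) * - (a + b * (1 + S * K)))
    with (-1 + (a + b * (1 + S * K)) * (a + b * (1 + S * K))) by ring.
  apply chord_center_cos_lt_half; assumption.
Qed.
Definition vertex_angle (N k : nat) : R := 2 * PI * INR k / INR N.

Lemma vertex_angle_ge0 N k : (0 < N)%nat -> 0 <= vertex_angle N k.
Proof.
  intros HN. pose proof PI_RGT_0. pose proof (pos_INR k).
  assert (0 < INR N) by (apply lt_0_INR; lia).
  unfold vertex_angle, Rdiv. apply Rmult_le_pos; [nra | left; apply Rinv_0_lt_compat; lra].
Qed.

Lemma vertex_angle_le N d m : (0 < N)%nat -> (d <= m)%nat ->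
  vertex_angle N d <= vertex_angle N m.
Proof.
  intros HN Hdm. pose proof PI_RGT_0. apply le_INR in Hdm.
  assert (0 < INR N) by (apply lt_0_INR; lia).
  unfold vertex_angle, Rdiv. apply Rmult_le_compat_r; [left; apply Rinv_0_lt_compat; lra | nra].
Qed.

Lemma vertex_angle_le_PI N m : (2 * m <= N)%nat -> (0 < N)%nat -> vertex_angle N m <= PI.
Proof.
  intros Hm HN. pose proof PI_RGT_0.
  assert (0 < INR N) by (apply lt_0_INR; lia).
  apply le_INR in Hm. rewrite mult_INR in Hm. simpl in Hm.
  unfold vertex_angle. apply (Rmult_le_reg_r (INR N)); [lra|]. field_simplify; nra.
Qed.

Lemma vertex_angle_sub N i j : (j <= i)%nat -> (0 < N)%nat ->
  vertex_angle N (i - j) = vertex_angle N i - vertex_angle N j.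
Proof.
  intros Hji HN. assert (0 < INR N) by (apply lt_0_INR; lia).
  unfold vertex_angle. rewrite minus_INR by exact Hji. field. lra.
Qed.

Lemma cos_vertex_angle_complement N d : (d <= N)%nat -> (0 < N)%nat ->
  cos (vertex_angle N (N - d)) = cos (vertex_angle N d).
Proof.
  intros Hd HN. assert (0 < INR N) by (apply lt_0_INR; lia).
  rewrite vertex_angle_sub by lia.
  replace (vertex_angle N N) with (2 * PI) by (unfold vertex_angle; field; lra).
  rewrite cos_minus, cos_2PI, sin_2PI. ring.
Qed.

Lemma cos_vertex_angle_ge N d m : (0 < N)%nat -> (d <= N)%nat ->
  (Nat.min d (N - d) <= m)%nat -> (2 * m <= N)%nat ->
  cos (vertex_angle N m) <= cos (vertex_angle N d).
Proof.
  intros HN Hd Hmin Hm.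
  assert (Hmono : forall d', (d' <= m)%nat -> cos (vertex_angle N m) <= cos (vertex_angle N d')).
  { intros d' Hd'. apply cos_decr_1; auto using vertex_angle_ge0, vertex_angle_le, vertex_angle_le_PI.
    apply Rle_trans with (vertex_angle N m); auto using vertex_angle_le, vertex_angle_le_PI. }
  destruct (Nat.le_ge_cases d (N - d)) as [Hle|Hge].
  - apply Hmono. lia.
  - rewrite <- (cos_vertex_angle_complement N d) by lia. apply Hmono. lia.
Qed.

Lemma cos_diag_ge N i j m : (i < N)%nat -> (j < N)%nat ->
  (diag_length N i j <= m)%nat -> (2 * m <= N)%nat ->
  cos (vertex_angle N m) <= cos (vertex_angle N i - vertex_angle N j).
Proof.
  unfold diag_length. intros Hi Hj Hd Hm.
  destruct (Nat.leb_spec i j) as [Hle|Hgt].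
  - rewrite <- Ropp_minus_distr, cos_neg, <- vertex_angle_sub by lia.
    apply cos_vertex_angle_ge; lia.
  - rewrite <- vertex_angle_sub by lia. apply cos_vertex_angle_ge; lia.
Qed.

Lemma cosh_sq x : cosh x * cosh x = 1 + sinh x * sinh x.
Proof.
  unfold cosh, sinh. rewrite exp_Ropp. pose proof (exp_pos x). field. lra.
Qed.

Lemma cosh_gt0 x : 0 < cosh x.
Proof. unfold cosh. pose proof (exp_pos x). pose proof (exp_pos (- x)). lra. Qed.

Section RegularPolygon.
Variables (N : nat) (c e1 e2 : pt) (rho : R).
Hypothesis Hframe : frame c e1 e2.

Notation v := (reg_vertex N c e1 e2 rho).

Lemma lor_center_vertex k : lor c (v k) = - cosh rho.
Proof.
  destruct Hframe as [[Hcc _] [Hc1 [Hc2 _]]].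
  unfold reg_vertex. lor_expand. rewrite Hcc, Hc1, Hc2. ring.
Qed.

Lemma lor_vertex_vertex i j : lor (v i) (v j) =
  - (1 + sinh rho * sinh rho * (1 - cos (vertex_angle N i - vertex_angle N j))).
Proof.
  destruct Hframe as [[Hcc _] [Hc1 [Hc2 [H11 [H22 H12]]]]].
  unfold reg_vertex. rewrite cos_minus. lor_expand.
  rewrite (lor_sym e1 c), (lor_sym e2 c), (lor_sym e2 e1), Hcc, Hc1, Hc2, H11, H22, H12.
  pose proof (cosh_sq rho). unfold vertex_angle. nra.
Qed.

Lemma lor_vertex_self k : lor (v k) (v k) = -1.
Proof. rewrite lor_vertex_vertex, Rminus_diag, cos_0. ring. Qed.

Lemma diagonal_center_angles_gt K0 i j p :
  (1 + sinh rho * sinh rho) * K0 < 1/2 ->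
  1 - cos (vertex_angle N i - vertex_angle N j) <= K0 ->
  geodesic_segment (v i) (v j) p ->
  tangle (tang p c) (tang p (v i)) > PI/3 /\ tangle (tang p c) (tang p (v j)) > PI/3.
Proof.
  intros HK0 HijK0 Hp.
  set (K := 1 - cos (vertex_angle N i - vertex_angle N j)) in *.
  assert (0 <= K) by (pose proof (COS_bound (vertex_angle N i - vertex_angle N j)); unfold K; lra).
  assert (HSK : (1 + sinh rho * sinh rho) * K < 1/2) by nra.
  assert (Hcc : lor c c = -1) by apply Hframe.
  pose proof (cosh_sq rho). pose proof (cosh_gt0 rho).
  pose proof (lor_vertex_vertex i j) as Hij. fold K in Hij.
  split.
  - apply (chord_center_angle_gt c _ (v j) p (sinh rho * sinh rho) K (cosh rho));
      auto using lor_center_vertex, lor_vertex_self; nra.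
  - apply (chord_center_angle_gt c _ (v i) p (sinh rho * sinh rho) K (cosh rho));
      auto using lor_center_vertex, lor_vertex_self, geodesic_segment_sym; try nra.
    rewrite lor_sym. exact Hij.
Qed.

End RegularPolygon.

Lemma oangle_bounds p u w : tangle u w > PI/3 -> PI/3 < oangle p u w < 5 * PI/3.
Proof.
  intros H. pose proof (acos_bound (lor u w / sqrt (lor u u * lor w w))). pose proof PI_RGT_0.
  unfold oangle. fold (tangle u w) in *.
  destruct (Rle_dec 0 (det3 p u w)); [lra|].
  destruct (Req_EM_T (tangle u w) 0); lra.
Qed.

Lemma list_min_gt lo x t : (forall y, In y (x :: t) -> lo < y) -> lo < Defs.list_min (x :: t).
Proof.
  simpl. induction t as [|y t IH]; intros H; simpl; [auto|].
  apply Rmin_glb_lt; [apply H; simpl; auto | apply IH; intros z [<-|Hz]; apply H; simpl; auto].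
Qed.

Lemma list_max_lt hi x t : (forall y, In y (x :: t) -> y < hi) -> Defs.list_max (x :: t) < hi.
Proof.
  simpl. induction t as [|y t IH]; intros H; simpl; [auto|].
  apply Rmax_lub_lt; [apply H; simpl; auto | apply IH; intros z [<-|Hz]; apply H; simpl; auto].
Qed.

Lemma internal_angle_gt c p a1 b1 a2 b2 :
  (forall q, In q (a1 :: b1 :: a2 :: b2 :: nil) -> tangle (tang p c) (tang p q) > PI/3) ->
  internal_angle c p a1 b1 a2 b2 > 2 * PI / 3.
Proof.
  intros H. pose proof PI_RGT_0. unfold internal_angle.
  set (ends := filter _ _). set (alpha := fun q => oangle p (tang p c) (tang p q)).
  assert (Halpha : forall y, In y (map alpha ends) -> PI/3 < y < 5 * PI/3).
  { intros y (q & <- & Hq)%in_map_iff. apply filter_In in Hq as [Hq _].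
    apply oangle_bounds, H, Hq. }
  destruct (map alpha ends) as [|x t]; [simpl; lra|].
  assert (PI/3 < Defs.list_min (x :: t)) by (apply list_min_gt; intros; apply Halpha; auto).
  assert (Defs.list_max (x :: t) < 5 * PI/3) by (apply list_max_lt; intros; apply Halpha; auto).
  lra.
Qed.

Lemma cos_vertex_angle_gt_half N m : (6 * m < N)%nat -> 1/2 < cos (vertex_angle N m).
Proof.
  intros Hm. pose proof PI_RGT_0.
  assert (0 < INR N) by (apply lt_0_INR; lia).
  assert (H6 : 6 * INR m < INR N) by (apply lt_INR in Hm; rewrite mult_INR in Hm; simpl in Hm; lra).
  assert (vertex_angle N m < PI/3).
  { unfold vertex_angle. apply (Rmult_lt_reg_r (INR N)); [lra|]. field_simplify; nra. }
  rewrite <- cos_PI3. apply cos_decreasing_1; try lra.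
  apply vertex_angle_ge0. lia.
Qed.

Lemma sinh_lt_of_lt_ln eps rho : 0 <= rho < ln (1 + eps) -> 0 < eps -> 0 <= sinh rho < eps.
Proof.
  intros [Hr0 Hr] Heps.
  assert (He1 : 1 <= exp rho) by (pose proof (exp_ineq1_le rho); lra).
  assert (He : exp rho < 1 + eps) by (rewrite <- (exp_ln (1 + eps)) by lra; apply exp_increasing, Hr).
  assert (Hinv : exp rho * exp (- rho) = 1) by (rewrite <- exp_plus, Rplus_opp_r; apply exp_0).
  pose proof (exp_pos (- rho)).
  unfold sinh. split; nra.
Qed.

Lemma small_radius K0 : 0 <= K0 < 1/2 ->
  exists r, 0 < r /\ forall rho, 0 < rho < r -> (1 + sinh rho * sinh rho) * K0 < 1/2.
Proof.
  intros HK0. set (eps := Rmin 1 ((1/2 - K0) / 2)).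
  assert (0 < eps) by (apply Rmin_glb_lt; lra).
  assert (eps <= 1) by apply Rmin_l.
  assert (eps <= (1/2 - K0) / 2) by apply Rmin_r.
  exists (ln (1 + eps)). split; [rewrite <- ln_1; apply ln_increasing; lra|].
  intros rho Hrho.
  destruct (sinh_lt_of_lt_ln eps rho) as [Hs0 Hs]; [lra | assumption |].
  assert (sinh rho * sinh rho < (1/2 - K0) / 2) by nra.
  nra.
Qed.

Theorem proposition3p5 :
  forall N : nat, (N > 6)%nat ->
  exists r : R, 0 < r /\
    forall (c e1 e2 : pt) (rho : R),
      frame c e1 e2 -> 0 < rho -> rho < r ->
      forall i j k l : nat,
        (i < N)%nat -> (j < N)%nat -> (k < N)%nat -> (l < N)%nat ->
        i <> j -> k <> l ->
        ~ ((i = k /\ j = l) \/ (i = l /\ j = k)) ->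
        (diag_length N i j <= (N - 1) / 6)%nat ->
        (diag_length N k l <= (N - 1) / 6)%nat ->
        forall p : pt,
          geodesic_segment (reg_vertex N c e1 e2 rho i) (reg_vertex N c e1 e2 rho j) p ->
          geodesic_segment (reg_vertex N c e1 e2 rho k) (reg_vertex N c e1 e2 rho l) p ->
          internal_angle c p
            (reg_vertex N c e1 e2 rho i) (reg_vertex N c e1 e2 rho j)
            (reg_vertex N c e1 e2 rho k) (reg_vertex N c e1 e2 rho l)
          > 2 * PI / 3.
Proof.
  intros N HN.
  set (m := ((N - 1) / 6)%nat).
  assert (Hm : (6 * m < N)%nat) by (pose proof (Nat.Div0.mul_div_le (N - 1) 6); unfold m; lia).
  set (K0 := 1 - cos (vertex_angle N m)).
  pose proof (cos_vertex_angle_gt_half N m Hm). pose proof (COS_bound (vertex_angle N m)).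
  destruct (small_radius K0) as [r [Hr Hsmall]]; [unfold K0; lra|].
  exists r. split; [exact Hr|].
  intros c e1 e2 rho Hf Hrho0 Hrho i j k l Hi Hj Hk Hl _ _ _ Hij Hkl p Hpij Hpkl.
  pose proof (Hsmall rho (conj Hrho0 Hrho)) as HK0.
  pose proof (cos_diag_ge N i j m Hi Hj Hij ltac:(lia)).
  pose proof (cos_diag_ge N k l m Hk Hl Hkl ltac:(lia)).
  destruct (diagonal_center_angles_gt N c e1 e2 rho Hf K0 i j p) as [Ai Aj]; auto; [unfold K0; lra|].
  destruct (diagonal_center_angles_gt N c e1 e2 rho Hf K0 k l p) as [Ak Al]; auto; [unfold K0; lra|].
  apply internal_angle_gt. simpl. intros q [<-|[<-|[<-|[<-|[]]]]]; assumption.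
Qed.
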